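(* Let $E$ be a finite set. For every $\mathcal{W}\subseteq\{+,-,0\}^E$ one has $\mathcal{P}(\mathcal{W})\subseteq\mathcal{Q}(\mathcal{W})$.
   Context: For $X\in\{+,-,0\}^E$: $X^+=\{e:X_e=+\}$, $X^-=\{e:X_e=-\}$, support $\underline{X}=X^+\cup X^-$; $(-X)_e=-X_e$; composition $(X\circ Y)_e=X_e$ if $X_e\neq0$, else $Y_e$; $S(X,Y)=(X^+\cap Y^-)\cup(X^-\cap Y^+)$. Sum: $(X+Y)_e=0$ if $e\in S(X,Y)$, else $(X\circ Y)_e$. For $X,Y$ with $\underline{X}=\underline{Y}$, $X\neq Y$, $e\in S(X,Y)$: $I_e(X,Y)=\{V : \underline{V}\subseteq\underline{X}\setminus\{e\}, V_f=X_f\ \forall f\notin S(X,Y)\}$ and $I(X,Y)=\bigcup_{e\in S(X,Y)}I_e(X,Y)$. For arbitrary $X,Y$ and $e\in S(X,Y)$: $I'_e(X,Y)=\{V : \underline{V}\subseteq(\underline{X}\cup\underline{Y})\setminus\{e\}, V_f=(X\circ Y)_f\ \forall f\notin S(X,Y)\}$, and $I'(X,Y)=\bigcup_{e\in S(X,Y)}I'_e(X,Y)$ (empty if $S(X,Y)=\emptyset$). $\mathrm{asym}(\mathcal{W})=\{V\in\mathcal{W}:-V\notin\mathcal{W}\}$; $\mathcal{P}(\mathcal{W})=\{X+(-Y): X,Y\in\mathrm{asym}(\mathcal{W}), \underline{X}=\underline{Y}, I(X,-Y)\cap\mathcal{W}=I(-X,Y)\cap\mathcal{W}=\emptyset\}$;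 $\mathcal{Q}(\mathcal{W})=\{X+(-Y): X,Y\in\mathcal{W}, I'(X,-Y)\cap\mathcal{W}=I'(-X,Y)\cap\mathcal{W}=\emptyset\}$. *)

From HB Require Import structures.
From mathcomp Require Import all_boot.
Set Implicit Arguments. Unset Strict Implicit. Unset Printing Implicit Defensive.

Inductive sign := sP | sM | sZ.

Definition sign_code (s : sign) : 'I_3 :=
  match s with sP => @Ordinal 3 0 isT | sM => @Ordinal 3 1 isT | sZ => @Ordinal 3 2 isT end.
Definition sign_decode (i : 'I_3) : option sign :=
  match val i with 0 => Some sP | 1 => Some sM | 2 => Some sZ | _ => None end.
Lemma sign_codeK : pcancel sign_code sign_decode. Proof. by case. Qed.
HB.instance Definition _ := Finite.copy sign (pcan_type sign_codeK).

Definition sopp (s : sign) : sign := match s with sP => sM | sM => sP | sZ => sZ end.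

Section SignVectors.
Variable E : finType.
Notation vec := {ffun E -> sign}.

Definition vopp (X : vec) : vec := [ffun e => sopp (X e)].
Definition supp (X : vec) : {set E} := [set e | X e != sZ].
Definition vcomp (X Y : vec) : vec := [ffun e => if X e != sZ then X e else Y e].
Definition sep (X Y : vec) : {set E} :=
  [set e | ((X e == sP) && (Y e == sM)) || ((X e == sM) && (Y e == sP))].
Definition vsum (X Y : vec) : vec := [ffun e => if e \in sep X Y then sZ else vcomp X Y e].

(* I_e(X,Y) and I(X,Y) (used for X, Y of equal support) *)
Definition Ie (X Y : vec) (e : E) : {set vec} :=
  [set V | (supp V \subset supp X :\ e) &&
           [forall f, (f \notin sep X Y) ==> (V f == X f)]].
Definition Iset (X Y : vec) : {set vec} := \bigcup_(e in sep X Y) Ie X Y e.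

Definition Ie' (X Y : vec) (e : E) : {set vec} :=
  [set V | (supp V \subset (supp X :|: supp Y) :\ e) &&
           [forall f, (f \notin sep X Y) ==> (V f == vcomp X Y f)]].
Definition Iset' (X Y : vec) : {set vec} := \bigcup_(e in sep X Y) Ie' X Y e.

Definition asym (W : {set vec}) : {set vec} := [set V in W | vopp V \notin W].

Definition Pset (W : {set vec}) : {set vec} :=
  [set Z | [exists X in asym W, exists Y in asym W,
     [&& supp X == supp Y,
         Iset X (vopp Y) :&: W == set0,
         Iset (vopp X) Y :&: W == set0 &
         Z == vsum X (vopp Y)]]].

Definition Qset (W : {set vec}) : {set vec} :=
  [set Z | [exists X in W, exists Y in W,
     [&& Iset' X (vopp Y) :&: W == set0,
         Iset' (vopp X) Y :&: W == set0 &
         Z == vsum X (vopp Y)]]].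
End SignVectors.

From mathcomp Require Import all_boot.

(* For vectors of equal support, [I'(X, Y)] collapses to [I(X, Y)]: the union
   of the supports is the common support, and [X o Y] agrees with [X]. Since
   [-Y] has the support of [Y], the conditions defining [P(W)] are then exactly
   those defining [Q(W)], restricted to [asym W], a subset of [W]. *)

Section SignVectorFacts.
Variable E : finType.
Implicit Types X Y : {ffun E -> sign}.

Lemma supp_vopp X : supp (vopp X) = supp X.
Proof. by apply/setP=> e; rewrite !inE ffunE; case: (X e). Qed.

Lemma vcomp_eq_supp X Y : supp X = supp Y -> vcomp X Y = X.
Proof.
move=> eqXY; apply/ffunP=> f; rewrite ffunE.
case: ifPn => // /negPn/eqP Xf0.
have : f \notin supp Y by rewrite -eqXY inE Xf0.
by rewrite inE negbK Xf0 => /eqP.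
Qed.

Lemma Iset'_eq_supp X Y : supp X = supp Y -> Iset' X Y = Iset X Y.
Proof.
move=> eqXY; apply: eq_bigr => e _; apply/setP=> V.
by rewrite !inE -eqXY setUid vcomp_eq_supp.
Qed.

End SignVectorFacts.

Lemma asym_sub {E : finType} (W : {set {ffun E -> sign}}) : asym W \subset W.
Proof. by apply/subsetP=> V; rewrite inE => /andP[]. Qed.

Theorem corollary5p1 (E : finType) (W : {set {ffun E -> sign}}) :
  Pset W \subset Qset W.
Proof.
apply/subsetP=> Z; rewrite inE => /existsP[X /andP[aX /existsP[Y /andP[aY]]]].
case/and4P=> /eqP eqXY I1 I2 /eqP ->.
rewrite inE; apply/existsP; exists X; rewrite (subsetP (asym_sub W)) //=.
apply/existsP; exists Y; rewrite (subsetP (asym_sub W)) //= eqxx andbT.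
by rewrite !Iset'_eq_supp ?supp_vopp ?I1.
Qed.
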